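(* Let $f_0,f_1,\dots,f_m$ be as in the context. Then (a) $f_i(0)-\inf_zf_i(z)\le 3000\pi^2\bar d\epsilon^2/(mL_f)$ for $i=1,\dots,m$, and $f_0(0)-\inf_xf_0(x)\le3000\pi^2\bar d\epsilon^2/L_f$; (b) $\nabla f_i$ is $L_f$-Lipschitz continuous for $i=0,1,\dots,m$; (c) $f_i$ is $\frac{50\pi\epsilon\sqrt{\bar d}}{\sqrt m}$-Lipschitz continuous for $i=1,\dots,m$, and $f_0$ is $50\pi\epsilon\sqrt{m\bar d}$-Lipschitz continuous.
   Context: Fix $\epsilon\in(0,1)$, $L_f>0$, integers $m_1\ge2$, $m_2\ge1$ with $m_1m_2$ even, $m=3m_1m_2$, an odd integer $\bar d\ge5$, $d=m\bar d$; $[z]_j$ is the $j$-th coordinate. $\Psi(u)=0$ ($u\le0$), $\Psi(u)=1-e^{-u^2}$ ($u>0$); $\Phi(v)=4\arctan v+2\pi$. For $z\in\mathbb R^{\bar d}$: $\varphi(z,1)=-\Psi(1)\Phi([z]_1)$, $\varphi(z,j)=\Psi(-[z]_{j-1})\Phi(-[z]_j)-\Psi([z]_{j-1})\Phi([z]_j)$ ($2\le j\le\bar d$); $h_i(z)=\varphi(z,1)+3\sum_{j=1}^{\lfloor\bar d/2\rfloor}\varphi(z,2j)$ for $1\le i\le m/3$, $h_i(z)=\varphi(z,1)$ for $m/3+1\le i\le 2m/3$, $h_i(z)=\varphi(z,1)+3\sum_{j=1}^{\lfloor\bar d/2\rfloor}\varphi(z,2j+1)$ for $2m/3+1\le i\le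 m$. $f_i(z)=\frac{300\pi\epsilon^2}{mL_f}h_i(\frac{\sqrt mL_fz}{150\pi\epsilon})$ for $z\in\mathbb R^{\bar d}$, and $f_0(x)=\sum_{i=1}^mf_i(x_i)$ for $x=(x_1^\top,\dots,x_m^\top)^\top\in\mathbb R^d$, $x_i\in\mathbb R^{\bar d}$. *)

(* concrete reals R.  Vectors of R^n are represented as
   functions nat -> R of which only the coordinates 0..n-1 are used
   (0-based; the paper's [z]_j is z (j-1)). *)
From Stdlib Require Import Reals Lra Lia.
Open Scope R_scope.

Fixpoint rsum (n : nat) (u : nat -> R) : R :=
  match n with O => 0 | S k => rsum k u + u k end.

Definition vadd (x y : nat -> R) : nat -> R := fun k => x k + y k.
Definition vsub (x y : nat -> R) : nat -> R := fun k => x k - y k.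
Definition vscal (a : R) (x : nat -> R) : nat -> R := fun k => a * x k.
Definition vzero : nat -> R := fun _ => 0.

Definition dot (n : nat) (x y : nat -> R) : R := rsum n (fun k => x k * y k).
Definition enorm (n : nat) (x : nat -> R) : R := sqrt (dot n x x).

Definition lipschitz (n : nat) (L : R) (f : (nat -> R) -> R) : Prop :=
  forall x y, Rabs (f x - f y) <= L * enorm n (vsub x y).

Definition has_gradient (n : nat) (f : (nat -> R) -> R) (g : nat -> R) (x : nat -> R) : Prop :=
  forall e, 0 < e -> exists delta, 0 < delta /\
    forall h, enorm n h < delta ->
      Rabs (f (vadd x h) - f x - dot n g h) <= e * enorm n h.

Definition grad_lipschitz (n : nat) (L : R) (f : (nat -> R) -> R) : Prop :=
  exists grad : (nat -> R) -> (nat -> R),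
    (forall x, has_gradient n f (grad x) x) /\
    (forall x y, enorm n (vsub (grad x) (grad y)) <= L * enorm n (vsub x y)).

Definition Psi (u : R) : R := if Rle_dec u 0 then 0 else 1 - exp (- u ^ 2).
Definition Phi (v : R) : R := 4 * atan v + 2 * PI.

(* varphi(z, j) for 1 <= j <= dbar (paper's 1-based j) *)
Definition varphi (z : nat -> R) (j : nat) : R :=
  match j with
  | O => 0 (* unused *)
  | S O => - Psi 1 * Phi (z 0%nat)
  | S (S k) => Psi (- z k) * Phi (- z (S k)) - Psi (z k) * Phi (z (S k))
  end.

(* h_i, i 1-based, 1 <= i <= m ; floor(dbar/2) = Nat.div2 dbar *)
Definition h (m dbar i : nat) (z : nat -> R) : R :=
  if (i <=? m / 3)%nat then
    varphi z 1 + 3 * rsum (Nat.div2 dbar) (fun k => varphi z (2 * (S k)))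
  else if (i <=? 2 * m / 3)%nat then varphi z 1
  else varphi z 1 + 3 * rsum (Nat.div2 dbar) (fun k => varphi z (2 * (S k) + 1)).

(* f_i on R^dbar, i 1-based *)
Definition fi (eps Lf : R) (m dbar i : nat) (z : nat -> R) : R :=
  300 * PI * eps ^ 2 / (INR m * Lf) *
  h m dbar i (vscal (sqrt (INR m) * Lf / (150 * PI * eps)) z).

(* the i-th block x_i in R^dbar of x in R^(m*dbar), i 1-based *)
Definition block (dbar i : nat) (x : nat -> R) : nat -> R :=
  fun j => x ((i - 1) * dbar + j)%nat.

Definition f0 (eps Lf : R) (m dbar : nat) (x : nat -> R) : R :=
  rsum m (fun k => fi eps Lf m dbar (S k) (block dbar (S k) x)).

(* Each f_i is K h(c z) with h(z) = -Psi(1) Phi(z_1) + 3 sum_k P(z_(a_k), z_(a_k + 1)), where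
   P(a, b) = Psi(-a) Phi(-b) - Psi(a) Phi(b) and the pairs of coordinates are disjoint.  Psi and Phi
   are bounded with bounded, Lipschitz derivatives (Psi is C^1 because its two pieces meet at 0 with
   value and slope 0), and Phi(-b) + Phi(b) = 4 pi; this bounds P, its Lipschitz constant and that
   of its gradient.  Since the pairs are disjoint, the bounds pass to h, the Lipschitz constant
   gaining a factor sqrt(dbar) by Cauchy-Schwarz.  The scaling satisfies K c = 2 eps / sqrt m and
   K c^2 = Lf / (75 pi), which turns these into the constants of the statement, and f_0, a sum over
   disjoint blocks of coordinates, inherits them (its gap and Lipschitz constant gain a factor m).
   Differentiability comes from a bound on the first-order Taylor remainder that is quadratic in the
   increment. *)

From Stdlib Require Import Reals Lra Lia FunctionalExtensionality.
From Coquelicot Require Import Coquelicot.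
Open Scope R_scope.

Lemma rsum_ext n u v : (forall k, (k < n)%nat -> u k = v k) -> rsum n u = rsum n v.
Proof.
  induction n as [|n IH]; intros H; simpl; [reflexivity|].
  rewrite IH, H; [reflexivity | lia | intros; apply H; lia].
Qed.

Lemma rsum_plus n u v : rsum n (fun k => u k + v k) = rsum n u + rsum n v.
Proof. induction n as [|n IH]; simpl; [lra | rewrite IH; lra]. Qed.

Lemma rsum_minus n u v : rsum n (fun k => u k - v k) = rsum n u - rsum n v.
Proof. induction n as [|n IH]; simpl; [lra | rewrite IH; lra]. Qed.

Lemma rsum_scal n a u : rsum n (fun k => a * u k) = a * rsum n u.
Proof. induction n as [|n IH]; simpl; [lra | rewrite IH; lra]. Qed.

Lemma rsum_const n c : rsum n (fun _ => c) = INR n * c.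
Proof. induction n as [|n IH]; simpl rsum; [simpl; ring | rewrite IH, S_INR; ring]. Qed.

Lemma rsum_le n u v : (forall k, (k < n)%nat -> u k <= v k) -> rsum n u <= rsum n v.
Proof.
  induction n as [|n IH]; intros H; simpl; [lra|].
  apply Rplus_le_compat; [apply IH; intros; apply H|apply H]; lia.
Qed.

Lemma rsum_nonneg n u : (forall k, (k < n)%nat -> 0 <= u k) -> 0 <= rsum n u.
Proof.
  intros H. replace 0 with (rsum n (fun _ => 0)) by (rewrite rsum_const; ring).
  now apply rsum_le.
Qed.

Lemma rsum_abs n u : Rabs (rsum n u) <= rsum n (fun k => Rabs (u k)).
Proof.
  induction n as [|n IH]; simpl; [rewrite Rabs_R0; lra|].
  eapply Rle_trans; [apply Rabs_triang | lra].
Qed.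

Lemma rsum_add a b u : rsum (a + b) u = rsum a u + rsum b (fun k => u (a + k)%nat).
Proof.
  induction b as [|b IH]; simpl; [rewrite Nat.add_0_r; ring|].
  rewrite Nat.add_succ_r; simpl; rewrite IH; ring.
Qed.

Lemma rsum_mul m n u : rsum (m * n) u = rsum m (fun k => rsum n (fun j => u (k * n + j)%nat)).
Proof. induction m as [|m IH]; simpl; [reflexivity|]. rewrite Nat.add_comm, rsum_add, IH; reflexivity. Qed.

Lemma rsum_pairs D u : rsum (2 * D) u = rsum D (fun k => u (2 * k)%nat + u (2 * k + 1)%nat).
Proof.
  induction D as [|D IH]; [reflexivity|].
  replace (2 * S D)%nat with (S (S (2 * D))) by lia.
  cbn [rsum]; rewrite IH; replace (2 * D + 1)%nat with (S (2 * D)) by lia; ring.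
Qed.

Lemma rsum_vanishing_tail a n u :
  (a <= n)%nat -> (forall k, (a <= k < n)%nat -> u k = 0) -> rsum n u = rsum a u.
Proof.
  intros Ha H. replace n with (a + (n - a))%nat by lia.
  rewrite rsum_add, (rsum_ext (n - a) _ (fun _ => 0)), rsum_const; [ring|].
  intros k Hk; apply H; lia.
Qed.

Lemma rsum_single n k u : (k < n)%nat -> (forall j, (j < n)%nat -> 0 <= u j) -> u k <= rsum n u.
Proof.
  intros Hk H. replace n with (S k + (n - S k))%nat by lia.
  rewrite rsum_add; simpl.
  assert (0 <= rsum k u) by (apply rsum_nonneg; intros; apply H; lia).
  assert (0 <= rsum (n - S k) (fun j => u (S (k + j)))) by (apply rsum_nonneg; intros; apply H; lia).
  lra.
Qed.

Lemma rsum_supported_at0 n u : (1 <= n)%nat -> (forall j, (0 < j)%nat -> u j = 0) -> rsum n u = u 0%nat.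
Proof.
  intros Hn H. rewrite (rsum_vanishing_tail 1); [simpl; ring | lia | intros; apply H; lia].
Qed.

(* [0 <= sum_k (n |v_k| - S)^2 = n (n Q - S^2)] with [S = sum_k |v_k|], [Q = sum_k v_k^2]. *)
Lemma rsum_abs_sq_le n v : rsum n (fun k => Rabs (v k)) ^ 2 <= INR n * rsum n (fun k => v k ^ 2).
Proof.
  set (S := rsum n (fun k => Rabs (v k))). set (Q := rsum n (fun k => v k ^ 2)).
  destruct (Nat.eq_dec n 0) as [->|Hn]; [unfold S; simpl; lra|].
  assert (Hpos : 0 < INR n) by (apply lt_0_INR; lia).
  assert (E : rsum n (fun k => (INR n * Rabs (v k) - S) ^ 2) = INR n * (INR n * Q - S ^ 2)).
  { rewrite (rsum_ext _ _ (fun k => INR n ^ 2 * v k ^ 2 - (2 * INR n * S) * Rabs (v k) + S ^ 2))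
      by (intros; rewrite <- (pow2_abs (v k)); ring).
    rewrite rsum_plus, rsum_minus, !rsum_scal, rsum_const; unfold Q, S; ring. }
  assert (0 <= rsum n (fun k => (INR n * Rabs (v k) - S) ^ 2))
    by (apply rsum_nonneg; intros; apply pow2_ge_0).
  nra.
Qed.

Lemma dot_ext n u u' w w' : (forall j, (j < n)%nat -> u j = u' j) ->
  (forall j, (j < n)%nat -> w j = w' j) -> dot n u w = dot n u' w'.
Proof. intros Hu Hw; apply rsum_ext; intros; rewrite Hu, Hw by assumption; reflexivity. Qed.

Lemma dot_vadd_l n u v w : dot n (vadd u v) w = dot n u w + dot n v w.
Proof. unfold dot, vadd; rewrite <- rsum_plus; apply rsum_ext; intros; ring. Qed.

Lemma dot_scal_l n a u w : dot n (vscal a u) w = a * dot n u w.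
Proof. unfold dot, vscal; rewrite <- rsum_scal; apply rsum_ext; intros; ring. Qed.

Lemma dot_scal_r n a u w : dot n u (vscal a w) = a * dot n u w.
Proof. unfold dot, vscal; rewrite <- rsum_scal; apply rsum_ext; intros; ring. Qed.

Lemma dot_self_nonneg n v : 0 <= dot n v v.
Proof. apply rsum_nonneg; intros; apply Rle_0_sqr. Qed.

Lemma coord_sq_le_dot n v k : (k < n)%nat -> v k ^ 2 <= dot n v v.
Proof.
  intros Hk; rewrite <- Rsqr_pow2.
  apply (rsum_single n k (fun j => v j * v j)); [assumption | intros; apply Rle_0_sqr].
Qed.

Lemma dot_vadd_sq_le n u v :
  dot n (vadd u v) (vadd u v) <= 2 * dot n u u + 2 * dot n v v.
Proof.
  unfold dot, vadd; rewrite <- !rsum_scal, <- rsum_plus; apply rsum_le; intros.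
  pose proof (Rle_0_sqr (u k - v k)); unfold Rsqr in *; nra.
Qed.

Lemma vscal_vadd a x y : vscal a (vadd x y) = vadd (vscal a x) (vscal a y).
Proof. apply functional_extensionality; intros; unfold vscal, vadd; ring. Qed.

Lemma vscal_vsub a x y : vsub (vscal a x) (vscal a y) = vscal a (vsub x y).
Proof. apply functional_extensionality; intros; unfold vscal, vsub; ring. Qed.

Lemma vsub_vadd u v u' v' : vsub (vadd u v) (vadd u' v') = vadd (vsub u u') (vsub v v').
Proof. apply functional_extensionality; intros; unfold vsub, vadd; ring. Qed.

Lemma vscal_vzero a : vscal a vzero = vzero.
Proof. apply functional_extensionality; intros; unfold vscal, vzero; ring. Qed.

Lemma enorm_nonneg n v : 0 <= enorm n v.
Proof. apply sqrt_pos. Qed.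

Lemma coord_le_enorm n v k : (k < n)%nat -> Rabs (v k) <= enorm n v.
Proof.
  intros Hk; unfold enorm; rewrite <- (sqrt_pow2 (Rabs (v k))) by apply Rabs_pos.
  apply sqrt_le_1_alt; rewrite pow2_abs; now apply coord_sq_le_dot.
Qed.

Lemma enorm_le_of_dot_le n v w L : 0 <= L ->
  dot n v v <= L ^ 2 * dot n w w -> enorm n v <= L * enorm n w.
Proof.
  intros HL H; unfold enorm.
  rewrite <- (sqrt_pow2 L), <- sqrt_mult_alt by (auto; apply pow2_ge_0).
  now apply sqrt_le_1_alt.
Qed.

Lemma sum_abs_le_sqrt_enorm n v : rsum n (fun k => Rabs (v k)) <= sqrt (INR n) * enorm n v.
Proof.
  rewrite <- (sqrt_pow2 (rsum _ _)) by (apply rsum_nonneg; intros; apply Rabs_pos).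
  unfold enorm; rewrite <- sqrt_mult_alt by apply pos_INR.
  apply sqrt_le_1_alt; eapply Rle_trans; [apply rsum_abs_sq_le|].
  right; f_equal; apply rsum_ext; intros; ring.
Qed.

Definition lipschitz1 (K : R) (f : R -> R) := forall x y, Rabs (f x - f y) <= K * Rabs (x - y).

Definition quadratic_remainder1 (C : R) (f f' : R -> R) :=
  forall a s, Rabs (f (a + s) - f a - f' a * s) <= C * s ^ 2.

Lemma lipschitz1_of_derive f f' K : (forall x, derivable_pt_lim f x (f' x)) ->
  (forall x, Rabs (f' x) <= K) -> lipschitz1 K f.
Proof.
  intros Hd HK x y. destruct (MVT_abs f f' y x) as [c [Hc _]]; [intros; apply Hd|].
  rewrite Hc; apply Rmult_le_compat_r; [apply Rabs_pos | apply HK].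
Qed.

Lemma lipschitz1_nonneg K f : lipschitz1 K f -> 0 <= K.
Proof.
  intros H. specialize (H 1 0). rewrite Rminus_0_r, Rabs_R1 in H.
  pose proof (Rabs_pos (f 1 - f 0)); lra.
Qed.

Lemma quadratic_remainder1_nonneg C f f' : quadratic_remainder1 C f f' -> 0 <= C.
Proof.
  intros H. specialize (H 0 1). rewrite pow1 in H.
  pose proof (Rabs_pos (f (0 + 1) - f 0 - f' 0 * 1)); lra.
Qed.

(* Mean value theorem applied to [x |-> f x - f' a * x] on the segment [a, a + s]. *)
Lemma quadratic_remainder1_of_derive f f' K : (forall x, derivable_pt_lim f x (f' x)) ->
  lipschitz1 K f' -> quadratic_remainder1 K f f'.
Proof.
  intros Hd HK a s. assert (K0 := lipschitz1_nonneg K f' HK).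
  destruct (MVT_abs (fun x => f x - f' a * x) (fun x => f' x - f' a) a (a + s)) as [c [Hc Hca]].
  { intros c _. replace (f' c - f' a) with (f' c - f' a * 1) by ring.
    apply (derivable_pt_lim_minus f (fun x => f' a * x)); [apply Hd|].
    apply (derivable_pt_lim_scal id), derivable_pt_lim_id. }
  replace (f (a + s) - f a - f' a * s) with (f (a + s) - f' a * (a + s) - (f a - f' a * a)) by ring.
  rewrite Hc; replace (a + s - a) with s by ring.
  assert (Rabs (c - a) <= Rabs s).
  { unfold Rmin, Rmax in Hca; destruct (Rle_dec a (a + s)).
    - rewrite (Rabs_pos_eq s) by lra; apply Rabs_le; lra.
    - rewrite (Rabs_left s) by lra; apply Rabs_le; lra. }
  assert (K * Rabs (c - a) <= K * Rabs s) by (apply Rmult_le_compat_l; assumption).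
  rewrite <- pow2_abs. specialize (HK c a). pose proof (Rabs_pos s). pose proof (Rabs_pos (f' c - f' a)).
  simpl; nra.
Qed.

Lemma lipschitz1_opp_arg K f : lipschitz1 K f -> lipschitz1 K (fun x => f (- x)).
Proof. intros H x y. eapply Rle_trans; [apply H|]. rewrite <- Rabs_Ropp; right; f_equal; f_equal; ring. Qed.

Lemma lipschitz1_opp K f : lipschitz1 K f -> lipschitz1 K (fun x => - f x).
Proof. intros H x y. rewrite <- Rabs_Ropp; eapply Rle_trans; [|apply H]; right; f_equal; ring. Qed.

Definition clamp (g : R -> R) (u : R) : R := if Rle_dec u 0 then 0 else g u.

Lemma clamp_derivable g g' x : g 0 = 0 -> g' 0 = 0 ->
  (forall y, derivable_pt_lim g y (g' y)) -> derivable_pt_lim (clamp g) x (clamp g' x).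
Proof.
  intros Hg0 Hg'0 Hd. destruct (Rtotal_order x 0) as [Hx|[->|Hx]].
  - unfold clamp at 2; destruct (Rle_dec x 0); [|lra].
    apply is_derive_Reals, (is_derive_ext_loc (fun _ => 0)); [|apply is_derive_Reals, derivable_pt_lim_const].
    apply (filter_imp (fun y => y < 0)); [|now apply open_lt].
    intros y Hy; unfold clamp; destruct (Rle_dec y 0); [reflexivity | lra].
  - intros e He. destruct (Hd 0 e He) as [d Hd0]. exists d. intros h Hh Hhd.
    specialize (Hd0 h Hh Hhd). rewrite Hg0, Hg'0 in Hd0.
    unfold clamp; destruct (Rle_dec 0 0) as [_|]; [|lra]. destruct (Rle_dec (0 + h) 0); [|exact Hd0].
    replace ((0 - 0) / h - 0) with 0 by (field; assumption). rewrite Rabs_R0; exact He.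
  - unfold clamp at 2; destruct (Rle_dec x 0); [lra|].
    apply is_derive_Reals, (is_derive_ext_loc g); [|apply is_derive_Reals, Hd].
    apply (filter_imp (fun y => 0 < y)); [|now apply open_gt].
    intros y Hy; unfold clamp; destruct (Rle_dec y 0); [lra | reflexivity].
Qed.

Lemma lipschitz1_clamp g K : g 0 = 0 -> lipschitz1 K g -> lipschitz1 K (clamp g).
Proof.
  intros Hg0 H x y. assert (K0 := lipschitz1_nonneg K g H).
  unfold clamp; destruct (Rle_dec x 0), (Rle_dec y 0).
  - rewrite Rminus_0_r, Rabs_R0; apply Rmult_le_pos; [assumption | apply Rabs_pos].
  - rewrite <- Hg0; eapply Rle_trans; [apply H|].
    apply Rmult_le_compat_l; [assumption|]. rewrite !Rabs_left1; lra.
  - rewrite <- Hg0; eapply Rle_trans; [apply H|].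
    apply Rmult_le_compat_l; [assumption|]. rewrite !Rabs_pos_eq; lra.
  - apply H.
Qed.

(** * The profiles Psi and Phi *)

Definition psi (u : R) : R := 1 - exp (- u ^ 2).
Definition dpsi (u : R) : R := 2 * u * exp (- u ^ 2).
Definition ddpsi (u : R) : R := (2 - 4 * u ^ 2) * exp (- u ^ 2).
Definition dPsi : R -> R := clamp dpsi.

Lemma Psi_clamp : Psi = clamp psi.
Proof. reflexivity. Qed.

Lemma psi_derivable x : derivable_pt_lim psi x (dpsi x).
Proof.
  apply is_derive_Reals; unfold psi, dpsi; auto_derive; [exact I|].
  replace (- (x * (x * 1))) with (- x ^ 2) by ring; ring.
Qed.

Lemma dpsi_derivable x : derivable_pt_lim dpsi x (ddpsi x).
Proof.
  apply is_derive_Reals; unfold dpsi, ddpsi; auto_derive; [exact I|].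
  replace (- (x * (x * 1))) with (- x ^ 2) by ring; ring.
Qed.

Lemma exp_neg_sq_mul u : exp (- u ^ 2) * exp (u ^ 2) = 1.
Proof. rewrite <- exp_plus, Rplus_opp_l; apply exp_0. Qed.

(* [2 |u| <= 1 + u^2 <= exp (u^2)] *)
Lemma dpsi_bound u : Rabs (dpsi u) <= 1.
Proof.
  unfold dpsi. pose proof (exp_neg_sq_mul u). pose proof (exp_pos (- u ^ 2)).
  pose proof (exp_ineq1_le (u ^ 2)). pose proof (pow2_ge_0 (u - 1)). pose proof (pow2_ge_0 (u + 1)).
  assert (0 <= exp (- u ^ 2) * (exp (u ^ 2) - 2 * u)) by (apply Rmult_le_pos; nra).
  assert (0 <= exp (- u ^ 2) * (exp (u ^ 2) + 2 * u)) by (apply Rmult_le_pos; nra).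
  apply Rabs_le; split; nra.
Qed.

(* [4 v - 2 <= 2 (1 + v + v^2 / 4) <= 2 exp v] with [v = u^2] *)
Lemma ddpsi_bound u : Rabs (ddpsi u) <= 2.
Proof.
  unfold ddpsi. pose proof (exp_neg_sq_mul u). pose proof (exp_pos (- u ^ 2)).
  assert (Hexp : 1 + u ^ 2 + (u ^ 2) ^ 2 / 4 <= exp (u ^ 2)).
  { replace (exp (u ^ 2)) with (exp (u ^ 2 / 2) * exp (u ^ 2 / 2)) by (rewrite <- exp_plus; f_equal; field).
    pose proof (exp_ineq1_le (u ^ 2 / 2)). pose proof (pow2_ge_0 u). nra. }
  pose proof (pow2_ge_0 (u ^ 2 - 2)).
  assert (0 <= exp (- u ^ 2) * (2 * exp (u ^ 2) - (2 - 4 * u ^ 2))) by (apply Rmult_le_pos; nra).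
  assert (0 <= exp (- u ^ 2) * (2 * exp (u ^ 2) + (2 - 4 * u ^ 2))) by (apply Rmult_le_pos; nra).
  apply Rabs_le; split; nra.
Qed.

Lemma Psi_derivable x : derivable_pt_lim Psi x (dPsi x).
Proof.
  rewrite Psi_clamp; apply clamp_derivable; [| | apply psi_derivable].
  - unfold psi; rewrite pow_i, Ropp_0, exp_0 by lia; ring.
  - unfold dpsi; ring.
Qed.

Lemma dPsi_bound u : Rabs (dPsi u) <= 1.
Proof. unfold dPsi, clamp; destruct (Rle_dec u 0); [rewrite Rabs_R0; lra | apply dpsi_bound]. Qed.

Lemma Psi_lipschitz : lipschitz1 1 Psi.
Proof. apply (lipschitz1_of_derive _ dPsi); [apply Psi_derivable | apply dPsi_bound]. Qed.

Lemma dPsi_lipschitz : lipschitz1 2 dPsi.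
Proof.
  apply lipschitz1_clamp; [unfold dpsi; ring|].
  apply (lipschitz1_of_derive _ ddpsi); [apply dpsi_derivable | apply ddpsi_bound].
Qed.

Lemma Psi_remainder : quadratic_remainder1 2 Psi dPsi.
Proof. apply quadratic_remainder1_of_derive; [apply Psi_derivable | apply dPsi_lipschitz]. Qed.

Lemma Psi_range u : 0 <= Psi u <= 1.
Proof.
  unfold Psi; destruct (Rle_dec u 0); [lra|].
  assert (exp (- u ^ 2) < 1).
  { rewrite <- exp_0; apply exp_increasing. assert (0 < u ^ 2) by (apply pow_lt; lra). lra. }
  pose proof (exp_pos (- u ^ 2)); lra.
Qed.

Lemma Psi_abs_le u : Rabs (Psi u) <= 1.
Proof. pose proof (Psi_range u); rewrite Rabs_pos_eq; lra. Qed.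

Definition dPhi (v : R) : R := 4 / (1 + v ^ 2).
Definition ddPhi (v : R) : R := - 8 * v / (1 + v ^ 2) ^ 2.

Lemma Phi_derivable x : derivable_pt_lim Phi x (dPhi x).
Proof.
  replace (dPhi x) with (4 * / (1 + x ^ 2) + 0) by (unfold dPhi; field; nra).
  apply (derivable_pt_lim_plus (mult_real_fct 4 atan) (fct_cte (2 * PI))).
  - apply derivable_pt_lim_scal, derivable_pt_lim_atan.
  - apply derivable_pt_lim_const.
Qed.

Lemma dPhi_derivable x : derivable_pt_lim dPhi x (ddPhi x).
Proof. apply is_derive_Reals; unfold dPhi, ddPhi; auto_derive; [nra | field; nra]. Qed.

Lemma dPhi_bound v : Rabs (dPhi v) <= 4.
Proof.
  unfold dPhi. pose proof (pow2_ge_0 v).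
  rewrite Rabs_pos_eq by (apply Rlt_le, Rdiv_lt_0_compat; lra).
  apply Rmult_le_reg_r with (1 + v ^ 2); [lra|]. field_simplify; nra.
Qed.

(* [8 |v| <= 4 (1 + v^2) <= 4 (1 + v^2)^2] *)
Lemma ddPhi_bound v : Rabs (ddPhi v) <= 4.
Proof.
  unfold ddPhi. pose proof (pow2_ge_0 v). assert (0 < (1 + v ^ 2) ^ 2) by nra.
  unfold Rdiv; rewrite Rabs_mult, Rabs_inv, (Rabs_pos_eq ((1 + v ^ 2) ^ 2)) by lra.
  apply Rmult_le_reg_r with ((1 + v ^ 2) ^ 2); [lra|].
  rewrite Rmult_assoc, Rinv_l, Rmult_1_r by lra.
  pose proof (pow2_ge_0 (v - 1)); pose proof (pow2_ge_0 (v + 1)).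
  apply Rabs_le; split; nra.
Qed.

Lemma Phi_lipschitz : lipschitz1 4 Phi.
Proof. apply (lipschitz1_of_derive _ dPhi); [apply Phi_derivable | apply dPhi_bound]. Qed.

Lemma dPhi_lipschitz : lipschitz1 4 dPhi.
Proof. apply (lipschitz1_of_derive _ ddPhi); [apply dPhi_derivable | apply ddPhi_bound]. Qed.

Lemma Phi_remainder : quadratic_remainder1 4 Phi dPhi.
Proof. apply quadratic_remainder1_of_derive; [apply Phi_derivable | apply dPhi_lipschitz]. Qed.

Lemma Phi_range v : 0 <= Phi v <= 4 * PI.
Proof. unfold Phi. pose proof (atan_bound v). lra. Qed.

Lemma Phi_opp_add v : Phi (- v) + Phi v = 4 * PI.
Proof. unfold Phi. rewrite atan_opp. ring. Qed.

Lemma Phi_0 : Phi 0 = 2 * PI.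
Proof. unfold Phi. rewrite atan_0. ring. Qed.

(** * The pair function *)

Lemma Rabs_mult_le x y X Y : Rabs x <= X -> Rabs y <= Y -> Rabs (x * y) <= X * Y.
Proof. intros; rewrite Rabs_mult; apply Rmult_le_compat; auto using Rabs_pos. Qed.

Lemma lipschitz_two_products (f1 f2 g1 g2 : R -> R) A F B G :
  lipschitz1 A f1 -> lipschitz1 A f2 -> (forall x, Rabs (f1 x) <= F) -> (forall x, Rabs (f2 x) <= F) ->
  lipschitz1 B g1 -> lipschitz1 B g2 -> (forall y, Rabs (g1 y) + Rabs (g2 y) <= G) ->
  forall a b a' b', Rabs ((f1 a * g1 b - f2 a * g2 b) - (f1 a' * g1 b' - f2 a' * g2 b'))
    <= A * G * Rabs (a - a') + 2 * F * B * Rabs (b - b').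
Proof.
  intros Hf1 Hf2 HF1 HF2 Hg1 Hg2 HG a b a' b'.
  replace (_ - _) with ((f1 a - f1 a') * g1 b + f1 a' * (g1 b - g1 b')
                        - ((f2 a - f2 a') * g2 b + f2 a' * (g2 b - g2 b'))) by ring.
  pose proof (Rabs_mult_le _ _ _ _ (Hf1 a a') (Rle_refl (Rabs (g1 b)))).
  pose proof (Rabs_mult_le _ _ _ _ (HF1 a') (Hg1 b b')).
  pose proof (Rabs_mult_le _ _ _ _ (Hf2 a a') (Rle_refl (Rabs (g2 b)))).
  pose proof (Rabs_mult_le _ _ _ _ (HF2 a') (Hg2 b b')).
  pose proof (lipschitz1_nonneg _ _ Hf1). pose proof (Rabs_pos (a - a')).
  unfold Rminus at 1; eapply Rle_trans; [apply Rabs_triang|]; rewrite Rabs_Ropp.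
  pose proof (Rabs_triang ((f1 a - f1 a') * g1 b) (f1 a' * (g1 b - g1 b'))).
  pose proof (Rabs_triang ((f2 a - f2 a') * g2 b) (f2 a' * (g2 b - g2 b'))).
  assert (A * Rabs (a - a') * (Rabs (g1 b) + Rabs (g2 b)) <= A * Rabs (a - a') * G)
    by (apply Rmult_le_compat_l; [apply Rmult_le_pos | apply HG]; assumption).
  lra.
Qed.

(* Splitting the remainder as [r_u * v (b + t) + u' a * s * (v (b + t) - v b) + u a * r_v]. *)
Lemma product_remainder (u u' v v' : R -> R) U0 U1 Cu V0 V1 Cv :
  (forall x, Rabs (u x) <= U0) -> (forall x, Rabs (u' x) <= U1) -> quadratic_remainder1 Cu u u' ->
  (forall y, Rabs (v y) <= V0) -> lipschitz1 V1 v -> quadratic_remainder1 Cv v v' ->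
  forall a b s t, Rabs (u (a + s) * v (b + t) - u a * v b - (u' a * v b * s + u a * v' b * t))
    <= (Cu * V0 + U1 * V1 + U0 * Cv) * (s ^ 2 + t ^ 2).
Proof.
  intros HU0 HU1 Hu HV0 HV1 Hv a b s t.
  replace (_ - _ - _) with ((u (a + s) - u a - u' a * s) * v (b + t) + u' a * s * (v (b + t) - v b)
                            + u a * (v (b + t) - v b - v' b * t)) by ring.
  pose proof (Rabs_mult_le _ _ _ _ (Hu a s) (HV0 (b + t))).
  pose proof (Rabs_mult_le _ _ _ _ (HU1 a) (Rle_refl (Rabs s))).
  replace (b + t - b) with t in HV1 by ring.
  pose proof (Rabs_mult_le _ _ _ _ H0 (HV1 (b + t) b)). replace (b + t - b) with t in H1 by ring.
  pose proof (Rabs_mult_le _ _ _ _ (HU0 a) (Hv b t)).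
  assert (0 <= U0) by (eapply Rle_trans; [apply Rabs_pos | apply (HU0 0)]).
  assert (0 <= U1) by (eapply Rle_trans; [apply Rabs_pos | apply (HU1 0)]).
  assert (0 <= V0) by (eapply Rle_trans; [apply Rabs_pos | apply (HV0 0)]).
  assert (0 <= V1) by (apply (lipschitz1_nonneg _ _ HV1)).
  assert (0 <= Cu) by exact (quadratic_remainder1_nonneg _ _ _ Hu).
  assert (0 <= Cv) by exact (quadratic_remainder1_nonneg _ _ _ Hv).
  assert (Hst : Rabs s * Rabs t <= s ^ 2 + t ^ 2).
  { rewrite <- (pow2_abs s), <- (pow2_abs t). pose proof (pow2_ge_0 (Rabs s - Rabs t)). nra. }
  eapply Rle_trans; [apply Rabs_triang|].
  eapply Rle_trans; [apply Rplus_le_compat_r, Rabs_triang|].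
  pose proof (pow2_ge_0 s); pose proof (pow2_ge_0 t).
  assert (Cu * s ^ 2 * V0 <= Cu * V0 * (s ^ 2 + t ^ 2)).
  { replace (Cu * s ^ 2 * V0) with (Cu * V0 * s ^ 2) by ring.
    apply Rmult_le_compat_l; [apply Rmult_le_pos | lra]; assumption. }
  assert (U0 * (Cv * t ^ 2) <= U0 * Cv * (s ^ 2 + t ^ 2)).
  { rewrite <- Rmult_assoc. apply Rmult_le_compat_l; [apply Rmult_le_pos | lra]; assumption. }
  assert (U1 * Rabs s * (V1 * Rabs t) <= U1 * V1 * (s ^ 2 + t ^ 2)).
  { replace (U1 * Rabs s * (V1 * Rabs t)) with (U1 * V1 * (Rabs s * Rabs t)) by ring.
    apply Rmult_le_compat_l; [nra | exact Hst]. }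
  lra.
Qed.

(* The paper's [varphi(z, j)], [j >= 2], is [P ([z]_(j-1)) ([z]_j)]. *)
Definition P (a b : R) : R := Psi (- a) * Phi (- b) - Psi a * Phi b.
Definition Pa (a b : R) : R := - dPsi (- a) * Phi (- b) - dPsi a * Phi b.
Definition Pb (a b : R) : R := - Psi (- a) * dPhi (- b) - Psi a * dPhi b.

Lemma Phi_abs_opp_add v : Rabs (Phi (- v)) + Rabs (Phi v) = 4 * PI.
Proof.
  pose proof (Phi_range v); pose proof (Phi_range (- v)).
  rewrite !Rabs_pos_eq by lra; apply Phi_opp_add.
Qed.

Lemma P_lipschitz a b a' b' : Rabs (P a b - P a' b') <= 4 * PI * (Rabs (a - a') + Rabs (b - b')).
Proof.
  eapply Rle_trans.
  - apply (lipschitz_two_products (fun x => Psi (- x)) Psi (fun y => Phi (- y)) Phi 1 1 4 (4 * PI));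
      auto using lipschitz1_opp_arg, Psi_lipschitz, Phi_lipschitz, Psi_abs_le.
    intros; rewrite Phi_abs_opp_add; lra.
  - pose proof PI2_3_2; pose proof (Rabs_pos (b - b')); nra.
Qed.

Lemma Pa_lipschitz a b a' b' : Rabs (Pa a b - Pa a' b') <= 8 * PI * Rabs (a - a') + 8 * Rabs (b - b').
Proof.
  eapply Rle_trans.
  - apply (lipschitz_two_products (fun x => - dPsi (- x)) dPsi (fun y => Phi (- y)) Phi 2 1 4 (4 * PI));
      auto using lipschitz1_opp, lipschitz1_opp_arg, dPsi_lipschitz, Phi_lipschitz, dPsi_bound.
    + intros; rewrite Rabs_Ropp; apply dPsi_bound.
    + intros; rewrite Phi_abs_opp_add; lra.
  - lra.
Qed.

Lemma Pb_lipschitz a b a' b' : Rabs (Pb a b - Pb a' b') <= 8 * Rabs (a - a') + 8 * Rabs (b - b').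
Proof.
  eapply Rle_trans.
  - apply (lipschitz_two_products (fun x => - Psi (- x)) Psi (fun y => dPhi (- y)) dPhi 1 1 4 8);
      auto using lipschitz1_opp, lipschitz1_opp_arg, Psi_lipschitz, dPhi_lipschitz, Psi_abs_le.
    + intros; rewrite Rabs_Ropp; apply Psi_abs_le.
    + intros; pose proof (dPhi_bound y); pose proof (dPhi_bound (- y)); lra.
  - lra.
Qed.

(* [2176 = 128 * (16 + 1)]: square the bounds of [Pa_lipschitz], [Pb_lipschitz] and use [PI ^ 2 <= 16]. *)
Lemma P_grad_lipschitz_sq a b a' b' :
  (Pa a b - Pa a' b') ^ 2 + (Pb a b - Pb a' b') ^ 2 <= 2176 * ((a - a') ^ 2 + (b - b') ^ 2).
Proof.
  pose proof (Pa_lipschitz a b a' b'); pose proof (Pb_lipschitz a b a' b').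
  rewrite <- (pow2_abs (Pa _ _ - _)), <- (pow2_abs (Pb _ _ - _)).
  rewrite <- (pow2_abs (a - a')), <- (pow2_abs (b - b')).
  set (x := Rabs (a - a')) in *; set (y := Rabs (b - b')) in *.
  assert (0 <= x) by apply Rabs_pos; assert (0 <= y) by apply Rabs_pos.
  pose proof (Rabs_pos (Pa a b - Pa a' b')); pose proof (Rabs_pos (Pb a b - Pb a' b')).
  pose proof PI_RGT_0; pose proof PI_4.
  assert (PI ^ 2 * x ^ 2 <= 16 * x ^ 2) by (apply Rmult_le_compat_r; [apply pow2_ge_0 | nra]).
  pose proof (pow2_ge_0 (PI * x - y)); pose proof (pow2_ge_0 (x - y)).
  assert (Rabs (Pa a b - Pa a' b') ^ 2 <= (8 * PI * x + 8 * y) ^ 2) by (apply pow_incr; lra).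
  assert (Rabs (Pb a b - Pb a' b') ^ 2 <= (8 * x + 8 * y) ^ 2) by (apply pow_incr; lra).
  nra.
Qed.

Lemma P_remainder a b s t :
  Rabs (P (a + s) (b + t) - P a b - (Pa a b * s + Pb a b * t)) <= 16 * (PI + 1) * (s ^ 2 + t ^ 2).
Proof.
  assert (HT := product_remainder Psi dPsi Phi dPhi 1 1 2 (4 * PI) 4 4 Psi_abs_le dPsi_bound Psi_remainder).
  assert (HPhi : forall y, Rabs (Phi y) <= 4 * PI)
    by (intros y; pose proof (Phi_range y); rewrite Rabs_pos_eq; lra).
  specialize (HT HPhi Phi_lipschitz Phi_remainder).
  pose proof (HT a b s t) as H1; pose proof (HT (- a) (- b) (- s) (- t)) as H2.
  replace ((- s) ^ 2 + (- t) ^ 2) with (s ^ 2 + t ^ 2) in H2 by ring.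
  unfold P, Pa, Pb. replace (- (a + s)) with (- a + - s) by ring. replace (- (b + t)) with (- b + - t) by ring.
  match goal with |- Rabs ?E <= _ => replace E with
    ((Psi (- a + - s) * Phi (- b + - t) - Psi (- a) * Phi (- b)
       - (dPsi (- a) * Phi (- b) * - s + Psi (- a) * dPhi (- b) * - t))
     - (Psi (a + s) * Phi (b + t) - Psi a * Phi b - (dPsi a * Phi b * s + Psi a * dPhi b * t))) by ring end.
  unfold Rminus at 1; eapply Rle_trans; [apply Rabs_triang|]; rewrite Rabs_Ropp. lra.
Qed.

Lemma P_gap a b : P 0 0 - P a b <= 4 * PI.
Proof.
  unfold P. rewrite Ropp_0. pose proof (Psi_range (- a)); pose proof (Psi_range a).
  pose proof (Phi_range (- b)); pose proof (Phi_range b). nra.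
Qed.

(** * First-order bounds on R^n *)

Definition quadratic_remainder (n : nat) (C : R) (f : (nat -> R) -> R) (g : (nat -> R) -> nat -> R) :=
  forall x h, Rabs (f (vadd x h) - f x - dot n (g x) h) <= C * dot n h h.

Definition lipschitz_sq (n : nat) (M : R) (g : (nat -> R) -> nat -> R) :=
  forall x y, dot n (vsub (g x) (g y)) (vsub (g x) (g y)) <= M * dot n (vsub x y) (vsub x y).

Lemma has_gradient_of_quadratic_remainder n C f g x :
  0 <= C -> quadratic_remainder n C f g -> has_gradient n f (g x) x.
Proof.
  intros HC H e He. exists (e / (C + 1)); split; [apply Rdiv_lt_0_compat; lra|].
  intros h Hh. eapply Rle_trans; [apply H|].
  assert (Hh0 := enorm_nonneg n h).
  assert (C * enorm n h <= e).
  { apply Rle_trans with (C * (e / (C + 1))); [apply Rmult_le_compat_l; lra|].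
    apply Rmult_le_reg_r with (C + 1); [lra|].
    replace (C * (e / (C + 1)) * (C + 1)) with (C * e) by (field; lra). nra. }
  replace (dot n h h) with (enorm n h * enorm n h) by (apply sqrt_sqrt, dot_self_nonneg).
  nra.
Qed.

Lemma grad_lipschitz_of_remainder n L C f g : 0 <= L -> 0 <= C ->
  quadratic_remainder n C f g -> lipschitz_sq n (L ^ 2) g -> grad_lipschitz n L f.
Proof.
  intros HL HC Hf Hg. exists g; split.
  - intros x; now apply has_gradient_of_quadratic_remainder with C.
  - intros x y; now apply enorm_le_of_dot_le.
Qed.

Section Combinators.
Variable n : nat.

Lemma quadratic_remainder_le C C' f g : C <= C' ->
  quadratic_remainder n C f g -> quadratic_remainder n C' f g.
Proof.
  intros HC H x h. eapply Rle_trans; [apply H|].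
  apply Rmult_le_compat_r; [apply dot_self_nonneg | assumption].
Qed.

Lemma quadratic_remainder_add C1 C2 f1 f2 g1 g2 :
  quadratic_remainder n C1 f1 g1 -> quadratic_remainder n C2 f2 g2 ->
  quadratic_remainder n (C1 + C2) (fun x => f1 x + f2 x) (fun x => vadd (g1 x) (g2 x)).
Proof.
  intros H1 H2 x h. rewrite dot_vadd_l.
  replace (_ - _ - _) with ((f1 (vadd x h) - f1 x - dot n (g1 x) h) + (f2 (vadd x h) - f2 x - dot n (g2 x) h))
    by ring.
  eapply Rle_trans; [apply Rabs_triang|]. specialize (H1 x h); specialize (H2 x h); lra.
Qed.

Lemma quadratic_remainder_scale a C f g : quadratic_remainder n C f g ->
  quadratic_remainder n (Rabs a * C) (fun x => a * f x) (fun x => vscal a (g x)).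
Proof.
  intros H x h. rewrite dot_scal_l.
  replace (_ - _ - _) with (a * (f (vadd x h) - f x - dot n (g x) h)) by ring.
  rewrite Rabs_mult, Rmult_assoc; apply Rmult_le_compat_l; [apply Rabs_pos | apply H].
Qed.

Lemma quadratic_remainder_rescale c C f g : quadratic_remainder n C f g ->
  quadratic_remainder n (c ^ 2 * C) (fun x => f (vscal c x)) (fun x => vscal c (g (vscal c x))).
Proof.
  intros H x h. rewrite vscal_vadd, dot_scal_l, <- dot_scal_r.
  eapply Rle_trans; [apply H|]. rewrite dot_scal_l, dot_scal_r; right; ring.
Qed.

Lemma lipschitz_sq_le M M' g : M <= M' -> lipschitz_sq n M g -> lipschitz_sq n M' g.
Proof.
  intros HM H x y. eapply Rle_trans; [apply H|].
  apply Rmult_le_compat_r; [apply dot_self_nonneg | assumption].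
Qed.

Lemma lipschitz_sq_add M1 M2 g1 g2 : lipschitz_sq n M1 g1 -> lipschitz_sq n M2 g2 ->
  lipschitz_sq n (2 * (M1 + M2)) (fun x => vadd (g1 x) (g2 x)).
Proof.
  intros H1 H2 x y. rewrite vsub_vadd.
  eapply Rle_trans; [apply dot_vadd_sq_le|]. specialize (H1 x y); specialize (H2 x y); lra.
Qed.

Lemma lipschitz_sq_scale a M g : lipschitz_sq n M g ->
  lipschitz_sq n (a ^ 2 * M) (fun x => vscal a (g x)).
Proof.
  intros H x y. rewrite vscal_vsub, dot_scal_l, dot_scal_r.
  specialize (H x y). pose proof (pow2_ge_0 a). simpl in *; nra.
Qed.

Lemma lipschitz_sq_rescale c M g : lipschitz_sq n M g ->
  lipschitz_sq n (c ^ 4 * M) (fun x => vscal c (g (vscal c x))).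
Proof.
  intros H x y. rewrite vscal_vsub, dot_scal_l, dot_scal_r.
  specialize (H (vscal c x) (vscal c y)). rewrite vscal_vsub, dot_scal_l, dot_scal_r in H.
  pose proof (pow2_ge_0 c). simpl in *; nra.
Qed.

Lemma lipschitz_le L L' f : L <= L' -> lipschitz n L f -> lipschitz n L' f.
Proof.
  intros HL H x y. eapply Rle_trans; [apply H|].
  apply Rmult_le_compat_r; [apply enorm_nonneg | assumption].
Qed.

Lemma lipschitz_add L1 L2 f1 f2 : lipschitz n L1 f1 -> lipschitz n L2 f2 ->
  lipschitz n (L1 + L2) (fun x => f1 x + f2 x).
Proof.
  intros H1 H2 x y. replace (_ - _) with ((f1 x - f1 y) + (f2 x - f2 y)) by ring.
  eapply Rle_trans; [apply Rabs_triang|]. specialize (H1 x y); specialize (H2 x y); lra.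
Qed.

Lemma lipschitz_scale a L f : lipschitz n L f -> lipschitz n (Rabs a * L) (fun x => a * f x).
Proof.
  intros H x y. rewrite <- Rmult_minus_distr_l, Rabs_mult, Rmult_assoc.
  apply Rmult_le_compat_l; [apply Rabs_pos | apply H].
Qed.

Lemma enorm_scal a v : enorm n (vscal a v) = Rabs a * enorm n v.
Proof.
  unfold enorm. rewrite dot_scal_l, dot_scal_r, <- Rmult_assoc, sqrt_mult_alt by apply Rle_0_sqr.
  fold (Rsqr a); rewrite sqrt_Rsqr_abs; reflexivity.
Qed.

Lemma lipschitz_rescale c L f : lipschitz n L f ->
  lipschitz n (L * Rabs c) (fun x => f (vscal c x)).
Proof.
  intros H x y. eapply Rle_trans; [apply H|].
  rewrite vscal_vsub, enorm_scal; right; ring.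
Qed.

End Combinators.

Definition coord0_grad (dphi : R -> R) (z : nat -> R) : nat -> R :=
  fun j => if (j =? 0)%nat then dphi (z 0%nat) else 0.

Section Coordinate0.
Variables (n : nat) (phi dphi : R -> R).
Hypothesis Hn : (1 <= n)%nat.

Lemma dot_coord0_grad z h : dot n (coord0_grad dphi z) h = dphi (z 0%nat) * h 0%nat.
Proof. apply rsum_supported_at0; [assumption | intros [|j] Hj; [lia | unfold coord0_grad; simpl; ring]]. Qed.

Lemma sqnorm_coord0_grad_sub x y :
  dot n (vsub (coord0_grad dphi x) (coord0_grad dphi y)) (vsub (coord0_grad dphi x) (coord0_grad dphi y))
  = (dphi (x 0%nat) - dphi (y 0%nat)) ^ 2.
Proof.
  unfold dot; rewrite rsum_supported_at0; [unfold vsub, coord0_grad; simpl; ring | assumption |].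
  intros [|j] Hj; [lia | unfold vsub, coord0_grad; simpl; ring].
Qed.

Lemma quadratic_remainder_coord0 C : 0 <= C -> quadratic_remainder1 C phi dphi ->
  quadratic_remainder n C (fun z => phi (z 0%nat)) (coord0_grad dphi).
Proof.
  intros HC H x h. rewrite dot_coord0_grad.
  eapply Rle_trans; [apply H|]. apply Rmult_le_compat_l; [assumption|].
  now apply coord_sq_le_dot.
Qed.

Lemma lipschitz_sq_coord0 K : lipschitz1 K dphi -> lipschitz_sq n (K ^ 2) (coord0_grad dphi).
Proof.
  intros H x y. rewrite sqnorm_coord0_grad_sub.
  assert (Hx := coord_sq_le_dot n (vsub x y) 0 Hn). unfold vsub in Hx |- *.
  rewrite <- (pow2_abs (_ - _)), <- (pow2_abs (x 0%nat - _)) in *.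
  specialize (H (x 0%nat) (y 0%nat)). pose proof (Rabs_pos (dphi (x 0%nat) - dphi (y 0%nat))).
  pose proof (pow2_ge_0 K). nra.
Qed.

Lemma lipschitz_coord0 K : lipschitz1 K phi -> 0 <= K -> lipschitz n K (fun z => phi (z 0%nat)).
Proof.
  intros H HK x y. eapply Rle_trans; [apply H|].
  apply Rmult_le_compat_l; [assumption | apply (coord_le_enorm n (vsub x y) 0 Hn)].
Qed.

End Coordinate0.

Definition window (o D : nat) (F : nat -> R) (j : nat) : R :=
  if andb (o <=? j)%nat (j - o <? 2 * D)%nat then F j else 0.

Definition pair_sum (p : R -> R -> R) (o D : nat) (z : nat -> R) : R :=
  rsum D (fun k => p (z (2 * k + o)%nat) (z (2 * k + o + 1)%nat)).

(* Coordinate [2 k + o] carries the partial [pa] and coordinate [2 k + o + 1] the partial [pb]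
   of the [k]-th pair. *)
Definition pair_partials (pa pb : R -> R -> R) (o : nat) (z : nat -> R) (j : nat) : R :=
  if Nat.even (j - o) then pa (z j) (z (j + 1)%nat) else pb (z (j - 1)%nat) (z j).

Definition pair_grad (pa pb : R -> R -> R) (o D : nat) (z : nat -> R) : nat -> R :=
  window o D (pair_partials pa pb o z).

Lemma rsum_window n o D F : (2 * D + o <= n)%nat ->
  rsum n (window o D F) = rsum D (fun k => F (2 * k + o)%nat + F (2 * k + o + 1)%nat).
Proof.
  intros Hn. unfold window.
  rewrite (rsum_vanishing_tail (o + 2 * D)); [| lia |].
  2:{ intros k Hk. destruct (Nat.leb_spec o k), (Nat.ltb_spec (k - o) (2 * D)); simpl; lia || reflexivity. }
  rewrite rsum_add, (rsum_ext o _ (fun _ => 0)), rsum_const, Rmult_0_r, Rplus_0_l.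
  2:{ intros k Hk. destruct (Nat.leb_spec o k); simpl; lia || reflexivity. }
  rewrite (rsum_ext (2 * D) _ (fun k => F (o + k)%nat)), rsum_pairs.
  - apply rsum_ext; intros k _; f_equal; f_equal; lia.
  - intros k Hk.
    destruct (Nat.leb_spec o (o + k)), (Nat.ltb_spec (o + k - o) (2 * D)); simpl; lia || reflexivity.
Qed.

Lemma rsum_pairs_le n o D u : (2 * D + o <= n)%nat -> (forall j, (j < n)%nat -> 0 <= u j) ->
  rsum D (fun k => u (2 * k + o)%nat + u (2 * k + o + 1)%nat) <= rsum n u.
Proof.
  intros Hn Hu. rewrite <- (rsum_window n) by assumption.
  apply rsum_le; intros j Hj; unfold window; destruct (andb _ _); [lra | now apply Hu].
Qed.

Lemma pair_partials_even pa pb o z k :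
  pair_partials pa pb o z (2 * k + o) = pa (z (2 * k + o)%nat) (z (2 * k + o + 1)%nat).
Proof.
  unfold pair_partials. replace (2 * k + o - o)%nat with (2 * k)%nat by lia.
  rewrite Nat.even_mul; reflexivity.
Qed.

Lemma pair_partials_odd pa pb o z k :
  pair_partials pa pb o z (2 * k + o + 1) = pb (z (2 * k + o)%nat) (z (2 * k + o + 1)%nat).
Proof.
  unfold pair_partials. replace (2 * k + o + 1 - o)%nat with (2 * k + 1)%nat by lia.
  rewrite Nat.even_add, Nat.even_mul; simpl. f_equal; f_equal; lia.
Qed.

Section PairSums.
Variables (p pa pb : R -> R -> R) (n o D : nat).
Hypothesis Hn : (2 * D + o <= n)%nat.

Lemma dot_pair_grad z h : dot n (pair_grad pa pb o D z) h =
  rsum D (fun k => pa (z (2 * k + o)%nat) (z (2 * k + o + 1)%nat) * h (2 * k + o)%nat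
                 + pb (z (2 * k + o)%nat) (z (2 * k + o + 1)%nat) * h (2 * k + o + 1)%nat).
Proof.
  unfold dot, pair_grad.
  rewrite (rsum_ext n _ (window o D (fun j => pair_partials pa pb o z j * h j)))
    by (intros; unfold window; destruct (andb _ _); ring).
  rewrite rsum_window by assumption.
  apply rsum_ext; intros; rewrite pair_partials_even, pair_partials_odd; reflexivity.
Qed.

Lemma sqnorm_pair_grad_sub x y :
  dot n (vsub (pair_grad pa pb o D x) (pair_grad pa pb o D y))
        (vsub (pair_grad pa pb o D x) (pair_grad pa pb o D y)) =
  rsum D (fun k =>
    (pa (x (2 * k + o)%nat) (x (2 * k + o + 1)%nat) - pa (y (2 * k + o)%nat) (y (2 * k + o + 1)%nat)) ^ 2
  + (pb (x (2 * k + o)%nat) (x (2 * k + o + 1)%nat) - pb (y (2 * k + o)%nat) (y (2 * k + o + 1)%nat)) ^ 2).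
Proof.
  unfold dot, pair_grad, vsub.
  rewrite (rsum_ext n _ (window o D (fun j => (pair_partials pa pb o x j - pair_partials pa pb o y j) ^ 2)))
    by (intros; unfold window; destruct (andb _ _); ring).
  rewrite rsum_window by assumption.
  apply rsum_ext; intros; rewrite !pair_partials_even, !pair_partials_odd; reflexivity.
Qed.

Lemma quadratic_remainder_pair_sum C : 0 <= C ->
  (forall a b s t, Rabs (p (a + s) (b + t) - p a b - (pa a b * s + pb a b * t)) <= C * (s ^ 2 + t ^ 2)) ->
  quadratic_remainder n C (pair_sum p o D) (pair_grad pa pb o D).
Proof.
  intros HC Hp x h. rewrite dot_pair_grad. unfold pair_sum, vadd. rewrite <- !rsum_minus.
  eapply Rle_trans; [apply rsum_abs|].
  eapply Rle_trans; [apply rsum_le; intros k _; apply Hp|].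
  rewrite rsum_scal. apply Rmult_le_compat_l; [assumption|].
  eapply Rle_trans; [|apply (rsum_pairs_le n o D (fun j => h j * h j)); auto; intros; apply Rle_0_sqr].
  right; apply rsum_ext; intros; ring.
Qed.

Lemma lipschitz_sq_pair_grad M : 0 <= M ->
  (forall a b a' b', (pa a b - pa a' b') ^ 2 + (pb a b - pb a' b') ^ 2 <= M * ((a - a') ^ 2 + (b - b') ^ 2)) ->
  lipschitz_sq n M (pair_grad pa pb o D).
Proof.
  intros HM Hp x y. rewrite sqnorm_pair_grad_sub.
  eapply Rle_trans; [apply rsum_le; intros k _; apply Hp|].
  rewrite rsum_scal. apply Rmult_le_compat_l; [assumption|].
  eapply Rle_trans;
    [|apply (rsum_pairs_le n o D (fun j => vsub x y j * vsub x y j)); auto; intros; apply Rle_0_sqr].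
  right; apply rsum_ext; intros; unfold vsub; ring.
Qed.

Lemma lipschitz_pair_sum L : 0 <= L ->
  (forall a b a' b', Rabs (p a b - p a' b') <= L * (Rabs (a - a') + Rabs (b - b'))) ->
  lipschitz n (L * sqrt (INR n)) (pair_sum p o D).
Proof.
  intros HL Hp x y. unfold pair_sum. rewrite <- rsum_minus.
  eapply Rle_trans; [apply rsum_abs|].
  eapply Rle_trans; [apply rsum_le; intros k _; apply Hp|].
  rewrite rsum_scal, Rmult_assoc. apply Rmult_le_compat_l; [assumption|].
  eapply Rle_trans; [|apply sum_abs_le_sqrt_enorm].
  apply (rsum_pairs_le n o D (fun j => Rabs (vsub x y j))); auto; intros; apply Rabs_pos.
Qed.

End PairSums.

Lemma pair_sum_gap p o D V : (forall a b, p 0 0 - p a b <= V) ->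
  forall w, pair_sum p o D vzero - pair_sum p o D w <= INR D * V.
Proof.
  intros Hp w. unfold pair_sum. rewrite <- rsum_minus, <- rsum_const.
  apply rsum_le; intros; apply Hp.
Qed.

Definition block_sum (m n : nat) (F : nat -> (nat -> R) -> R) (x : nat -> R) : R :=
  rsum m (fun k => F (S k) (block n (S k) x)).

(* Coordinate [j] of [R^(m n)] is coordinate [j mod n] of the block [S (j / n)]. *)
Definition block_grad (n : nat) (G : nat -> (nat -> R) -> nat -> R) (x : nat -> R) : nat -> R :=
  fun j => G (S (j / n)) (block n (S (j / n)) x) (j mod n).

Lemma block_block_grad n G x k j : (j < n)%nat ->
  block n (S k) (block_grad n G x) j = G (S k) (block n (S k) x) j.
Proof.
  intros Hj. unfold block_grad, block. rewrite !Nat.sub_succ, !Nat.sub_0_r.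
  rewrite Nat.div_add_l, Nat.div_small, Nat.add_0_r, Nat.add_comm, Nat.Div0.mod_add, Nat.mod_small by lia.
  reflexivity.
Qed.

Lemma dot_blocks m n u w :
  dot (m * n) u w = rsum m (fun k => dot n (block n (S k) u) (block n (S k) w)).
Proof.
  unfold dot; rewrite rsum_mul; apply rsum_ext; intros k _; apply rsum_ext; intros j _.
  unfold block; replace (S k - 1)%nat with k by lia; reflexivity.
Qed.

Lemma enorm_block_le m n v k : (k < m)%nat -> enorm n (block n (S k) v) <= enorm (m * n) v.
Proof.
  intros Hk; apply sqrt_le_1_alt; rewrite (dot_blocks m n v v).
  apply (rsum_single m k (fun k => dot n (block n (S k) v) (block n (S k) v))); [assumption|].
  intros; apply dot_self_nonneg.
Qed.

Section BlockSums.
Variables (m n : nat) (F : nat -> (nat -> R) -> R) (G : nat -> (nat -> R) -> nat -> R).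

Lemma quadratic_remainder_block_sum C :
  (forall k, (k < m)%nat -> quadratic_remainder n C (F (S k)) (G (S k))) ->
  quadratic_remainder (m * n) C (block_sum m n F) (block_grad n G).
Proof.
  intros HF x h. unfold block_sum. rewrite !dot_blocks, <- rsum_scal, <- !rsum_minus.
  eapply Rle_trans; [apply rsum_abs|]. apply rsum_le; intros k Hk.
  rewrite (dot_ext n _ (G (S k) (block n (S k) x)) _ (block n (S k) h))
    by (intros; auto using block_block_grad).
  apply HF, Hk.
Qed.

Lemma lipschitz_sq_block_grad M :
  (forall k, (k < m)%nat -> lipschitz_sq n M (G (S k))) -> lipschitz_sq (m * n) M (block_grad n G).
Proof.
  intros HG x y. rewrite !dot_blocks, <- rsum_scal. apply rsum_le; intros k Hk.
  set (d := vsub (G (S k) (block n (S k) x)) (G (S k) (block n (S k) y))).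
  rewrite (dot_ext n _ d _ d)
    by (intros j Hj; unfold d, vsub; rewrite <- !(block_block_grad n G _ k j Hj); reflexivity).
  apply HG, Hk.
Qed.

Lemma lipschitz_block_sum L : 0 <= L ->
  (forall k, (k < m)%nat -> lipschitz n L (F (S k))) -> lipschitz (m * n) (INR m * L) (block_sum m n F).
Proof.
  intros HL HF x y. unfold block_sum. rewrite <- rsum_minus.
  eapply Rle_trans; [apply rsum_abs|].
  rewrite Rmult_assoc, <- rsum_const. apply rsum_le; intros k Hk.
  eapply Rle_trans; [apply HF, Hk|].
  apply Rmult_le_compat_l; [assumption | apply (enorm_block_le m n (vsub x y) k Hk)].
Qed.

Lemma block_sum_gap V : (forall k w, (k < m)%nat -> F (S k) vzero - F (S k) w <= V) ->
  forall x, block_sum m n F vzero - block_sum m n F x <= INR m * V.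
Proof.
  intros HF x. unfold block_sum. rewrite <- rsum_minus, <- rsum_const.
  apply rsum_le; intros k Hk; apply HF, Hk.
Qed.

End BlockSums.

(** * The functions h_i *)

Definition chain (o D : nat) (z : nat -> R) : R := - Psi 1 * Phi (z 0%nat) + 3 * pair_sum P o D z.

Definition chain_grad (o D : nat) (z : nat -> R) : nat -> R :=
  vadd (vscal (- Psi 1) (coord0_grad dPhi z)) (vscal 3 (pair_grad Pa Pb o D z)).

Section Chain.
Variables (n o D : nat).
Hypotheses (Hn : (1 <= n)%nat) (HoD : (2 * D + o <= n)%nat).

Lemma chain_remainder : quadratic_remainder n (4 + 48 * (PI + 1)) (chain o D) (chain_grad o D).
Proof.
  assert (H := quadratic_remainder_add n _ _ _ _ _ _
    (quadratic_remainder_scale n (- Psi 1) _ _ _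
       (quadratic_remainder_coord0 n Phi dPhi Hn 4 ltac:(lra) Phi_remainder))
    (quadratic_remainder_scale n 3 _ _ _
       (quadratic_remainder_pair_sum P Pa Pb n o D HoD (16 * (PI + 1))
          ltac:(pose proof PI_RGT_0; lra) P_remainder))).
  eapply quadratic_remainder_le; [|exact H].
  pose proof (Psi_range 1). rewrite Rabs_Ropp, !Rabs_pos_eq by lra. lra.
Qed.

Lemma chain_grad_lipschitz_sq : lipschitz_sq n 39200 (chain_grad o D).
Proof.
  assert (H := lipschitz_sq_add n _ _ _ _
    (lipschitz_sq_scale n (- Psi 1) _ _ (lipschitz_sq_coord0 n dPhi Hn 4 dPhi_lipschitz))
    (lipschitz_sq_scale n 3 _ _
       (lipschitz_sq_pair_grad Pa Pb n o D HoD 2176 ltac:(lra) P_grad_lipschitz_sq))).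
  eapply lipschitz_sq_le; [|exact H].
  (* [39200 = 2 (4^2 + 3^2 * 2176)] *)
  pose proof (Psi_range 1). nra.
Qed.

Lemma chain_lipschitz : lipschitz n (4 + 12 * PI * sqrt (INR n)) (chain o D).
Proof.
  assert (H := lipschitz_add n _ _ _ _
    (lipschitz_scale n (- Psi 1) _ _ (lipschitz_coord0 n Phi Hn 4 Phi_lipschitz ltac:(lra)))
    (lipschitz_scale n 3 _ _
       (lipschitz_pair_sum P n o D HoD (4 * PI) ltac:(pose proof PI_RGT_0; lra) P_lipschitz))).
  eapply lipschitz_le; [|exact H].
  pose proof (Psi_range 1). rewrite Rabs_Ropp, !Rabs_pos_eq by lra. lra.
Qed.

End Chain.

Lemma chain_gap o D w : chain o D vzero - chain o D w <= 2 * PI + 12 * PI * INR D.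
Proof.
  unfold chain. pose proof (pair_sum_gap P o D (4 * PI) P_gap w).
  unfold vzero at 1; rewrite Phi_0. pose proof (Psi_range 1). pose proof (Phi_range (w 0%nat)). nra.
Qed.

(* [h_i] adds [varphi(z, 2 j)], i.e. the pairs [(z (2 k), z (2 k + 1))], for [i <= m/3], nothing for
   [m/3 < i <= 2m/3], and [varphi(z, 2 j + 1)], i.e. the pairs [(z (2 k + 1), z (2 k + 2))], beyond. *)
Definition chain_offset (m i : nat) : nat :=
  if (i <=? m / 3)%nat then 0 else if (i <=? 2 * m / 3)%nat then 0 else 1.

Definition chain_length (m n i : nat) : nat :=
  if (i <=? m / 3)%nat then Nat.div2 n else if (i <=? 2 * m / 3)%nat then 0 else Nat.div2 n.

Lemma h_chain m n i : h m n i = chain (chain_offset m i) (chain_length m n i).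
Proof.
  apply functional_extensionality; intros z.
  unfold h, chain, chain_offset, chain_length, pair_sum.
  destruct (i <=? m / 3)%nat; [|destruct (i <=? 2 * m / 3)%nat].
  - do 2 f_equal. apply rsum_ext; intros k _.
    replace (2 * S k)%nat with (S (S (2 * k + 0))) by lia.
    replace (2 * k + 0 + 1)%nat with (S (2 * k + 0)) by lia. reflexivity.
  - simpl; ring.
  - do 2 f_equal. apply rsum_ext; intros k _.
    replace (2 * S k + 1)%nat with (S (S (2 * k + 1))) by lia.
    replace (2 * k + 1 + 1)%nat with (S (2 * k + 1)) by lia. reflexivity.
Qed.

Lemma chain_window_fits m n i : Nat.Odd n -> (2 * chain_length m n i + chain_offset m i <= n)%nat.
Proof.
  intros Ho. pose proof (Nat.Odd_double n Ho). unfold Nat.double in *.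
  unfold chain_length, chain_offset.
  destruct (i <=? m / 3)%nat; [|destruct (i <=? 2 * m / 3)%nat]; lia.
Qed.

Section Components.
Variables (eps Lf : R) (m n : nat).
Hypotheses (Heps : 0 < eps) (HLf : 0 < Lf) (Hm : (1 <= m)%nat) (Hn : (2 <= n)%nat) (Hodd : Nat.Odd n).

Definition fi_scale : R := 300 * PI * eps ^ 2 / (INR m * Lf).
Definition fi_stretch : R := sqrt (INR m) * Lf / (150 * PI * eps).

Definition fi_grad (i : nat) (z : nat -> R) : nat -> R :=
  vscal fi_scale (vscal fi_stretch (chain_grad (chain_offset m i) (chain_length m n i) (vscal fi_stretch z))).

Lemma fi_chain i :
  fi eps Lf m n i = fun z => fi_scale * chain (chain_offset m i) (chain_length m n i) (vscal fi_stretch z).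
Proof. unfold fi; rewrite h_chain; reflexivity. Qed.

Lemma sqrt_m_pos : 0 < sqrt (INR m).
Proof. apply sqrt_lt_R0, lt_0_INR; lia. Qed.

Lemma fi_scale_pos : 0 < fi_scale.
Proof.
  unfold fi_scale. pose proof PI_RGT_0. assert (0 < INR m) by (apply lt_0_INR; lia).
  apply Rdiv_lt_0_compat; [apply Rmult_lt_0_compat; [lra | apply pow_lt; lra] | nra].
Qed.

Lemma fi_stretch_pos : 0 < fi_stretch.
Proof. unfold fi_stretch. pose proof sqrt_m_pos. pose proof PI_RGT_0. apply Rdiv_lt_0_compat; nra. Qed.

Lemma fi_scale_stretch : fi_scale * fi_stretch = 2 * eps / sqrt (INR m).
Proof.
  unfold fi_scale, fi_stretch. pose proof sqrt_m_pos. pose proof PI_RGT_0.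
  rewrite <- (sqrt_sqrt (INR m)) at 1 by apply pos_INR. field; lra.
Qed.

Lemma fi_scale_stretch2 : fi_scale * fi_stretch ^ 2 = Lf / (75 * PI).
Proof.
  unfold fi_scale, fi_stretch. pose proof sqrt_m_pos. pose proof PI_RGT_0.
  rewrite <- (sqrt_sqrt (INR m)) at 1 by apply pos_INR. field; lra.
Qed.

Lemma fi_gap i z :
  fi eps Lf m n i vzero - fi eps Lf m n i z <= 3000 * PI ^ 2 * INR n * eps ^ 2 / (INR m * Lf).
Proof.
  rewrite fi_chain, vscal_vzero, <- Rmult_minus_distr_l.
  pose proof (chain_gap (chain_offset m i) (chain_length m n i) (vscal fi_stretch z)).
  assert (2 * INR (chain_length m n i) <= INR n).
  { pose proof (chain_window_fits m n i Hodd). rewrite <- (mult_INR 2). apply le_INR; lia. }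
  assert (1 <= INR n) by (apply (le_INR 1); lia).
  pose proof fi_scale_pos. pose proof PI_RGT_0.
  apply Rle_trans with (fi_scale * (10 * PI * INR n)); [apply Rmult_le_compat_l; nra|].
  unfold fi_scale; right; field. split; [lra | apply not_0_INR; lia].
Qed.

Lemma fi_remainder : exists C, 0 <= C /\
  forall i, quadratic_remainder n C (fi eps Lf m n i) (fi_grad i).
Proof.
  exists (Rabs fi_scale * (fi_stretch ^ 2 * (4 + 48 * (PI + 1)))). split.
  - pose proof PI_RGT_0. apply Rmult_le_pos; [apply Rabs_pos | apply Rmult_le_pos; [apply pow2_ge_0 | lra]].
  - intros i; rewrite fi_chain. apply quadratic_remainder_scale, quadratic_remainder_rescale, chain_remainder;
      [lia | apply chain_window_fits, Hodd].
Qed.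

(* [(Lf / (75 PI))^2 * 39200 <= Lf^2] because [39200 <= 5625 * 9 <= 5625 PI^2]. *)
Lemma fi_grad_lipschitz_sq i : lipschitz_sq n (Lf ^ 2) (fi_grad i).
Proof.
  eapply lipschitz_sq_le; [|apply lipschitz_sq_scale, lipschitz_sq_rescale, chain_grad_lipschitz_sq;
    [lia | apply chain_window_fits, Hodd]].
  replace (fi_scale ^ 2 * (fi_stretch ^ 4 * 39200)) with ((fi_scale * fi_stretch ^ 2) ^ 2 * 39200) by ring.
  rewrite fi_scale_stretch2. pose proof PI2_3_2.
  replace ((Lf / (75 * PI)) ^ 2 * 39200) with (Lf ^ 2 * (39200 / (5625 * PI ^ 2))) by (field; lra).
  rewrite <- (Rmult_1_r (Lf ^ 2)) at 2. apply Rmult_le_compat_l; [apply pow2_ge_0|].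
  apply Rmult_le_reg_r with (5625 * PI ^ 2); [nra|]. unfold Rdiv; rewrite Rmult_assoc, Rinv_l by nra. nra.
Qed.

Lemma fi_lipschitz i : lipschitz n (50 * PI * eps * sqrt (INR n) / sqrt (INR m)) (fi eps Lf m n i).
Proof.
  rewrite fi_chain.
  eapply lipschitz_le; [|apply lipschitz_scale, lipschitz_rescale, chain_lipschitz;
    [lia | apply chain_window_fits, Hodd]].
  pose proof fi_scale_pos; pose proof fi_stretch_pos; pose proof sqrt_m_pos; pose proof PI2_3_2.
  rewrite !Rabs_pos_eq by lra.
  assert (Hs : 7 / 5 <= sqrt (INR n)).
  { rewrite <- (sqrt_pow2 (7 / 5)) by lra. apply sqrt_le_1_alt.
    apply Rle_trans with (INR 2); [simpl; lra | apply le_INR; lia]. }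
  replace (fi_scale * ((4 + 12 * PI * sqrt (INR n)) * fi_stretch))
    with (fi_scale * fi_stretch * (4 + 12 * PI * sqrt (INR n))) by ring.
  rewrite fi_scale_stretch.
  replace (50 * PI * eps * sqrt (INR n) / sqrt (INR m)) with (2 * eps / sqrt (INR m) * (25 * PI * sqrt (INR n)))
    by (field; lra).
  apply Rmult_le_compat_l; [apply Rlt_le, Rdiv_lt_0_compat; lra | nra].
Qed.

Lemma f0_gap x : f0 eps Lf m n vzero - f0 eps Lf m n x <= 3000 * PI ^ 2 * INR n * eps ^ 2 / Lf.
Proof.
  eapply Rle_trans; [apply (block_sum_gap m n (fi eps Lf m n)); intros; apply fi_gap|].
  right; field. split; [lra | apply not_0_INR; lia].
Qed.

Lemma f0_grad_lipschitz : grad_lipschitz (m * n) Lf (f0 eps Lf m n).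
Proof.
  destruct fi_remainder as [C [HC Hfi]].
  apply (grad_lipschitz_of_remainder _ _ C _ (block_grad n fi_grad)); [lra | assumption | |].
  - apply quadratic_remainder_block_sum; intros; apply Hfi.
  - apply lipschitz_sq_block_grad; intros; apply fi_grad_lipschitz_sq.
Qed.

Lemma f0_lipschitz : lipschitz (m * n) (50 * PI * eps * sqrt (INR m * INR n)) (f0 eps Lf m n).
Proof.
  eapply lipschitz_le; [|apply (lipschitz_block_sum m n (fi eps Lf m n)); [|intros; apply fi_lipschitz]].
  - pose proof sqrt_m_pos. rewrite sqrt_mult_alt by apply pos_INR.
    rewrite <- (sqrt_sqrt (INR m)) at 1 by apply pos_INR. right; field; lra.
  - pose proof sqrt_m_pos; pose proof PI_RGT_0; pose proof (sqrt_pos (INR n)).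
    apply Rmult_le_pos; [|apply Rlt_le, Rinv_0_lt_compat; assumption].
    apply Rmult_le_pos; [apply Rmult_le_pos|]; lra.
Qed.

End Components.

Theorem lemma2 (eps Lf : R) (m1 m2 dbar : nat) :
  0 < eps < 1 -> 0 < Lf ->
  (2 <= m1)%nat -> (1 <= m2)%nat -> Nat.Even (m1 * m2) ->
  Nat.Odd dbar -> (5 <= dbar)%nat ->
  let m := (3 * m1 * m2)%nat in
  let d := (m * dbar)%nat in
  (* (a) *)
  ((forall i : nat, (1 <= i <= m)%nat -> forall z : nat -> R,
      fi eps Lf m dbar i vzero - fi eps Lf m dbar i z
        <= 3000 * PI ^ 2 * INR dbar * eps ^ 2 / (INR m * Lf)) /\
   (forall x : nat -> R,
      f0 eps Lf m dbar vzero - f0 eps Lf m dbar x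
        <= 3000 * PI ^ 2 * INR dbar * eps ^ 2 / Lf)) /\
  (* (b) *)
  ((forall i : nat, (1 <= i <= m)%nat -> grad_lipschitz dbar Lf (fi eps Lf m dbar i)) /\
   grad_lipschitz d Lf (f0 eps Lf m dbar)) /\
  (* (c) *)
  ((forall i : nat, (1 <= i <= m)%nat ->
      lipschitz dbar (50 * PI * eps * sqrt (INR dbar) / sqrt (INR m)) (fi eps Lf m dbar i)) /\
   lipschitz d (50 * PI * eps * sqrt (INR m * INR dbar)) (f0 eps Lf m dbar)).
Proof.
  intros [Heps _] HLf Hm1 Hm2 _ Hodd Hdbar m d.
  assert (Hm : (1 <= m)%nat) by (unfold m; lia).
  assert (Hn : (2 <= dbar)%nat) by lia.
  repeat split.
  - intros i _ z; now apply fi_gap.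
  - intros x; now apply f0_gap.
  - intros i _. destruct (fi_remainder eps Lf m dbar Hm Hn Hodd) as [C [HC Hfi]].
    apply (grad_lipschitz_of_remainder _ _ C _ (fi_grad eps Lf m dbar i)); [lra | assumption | apply Hfi |].
    now apply fi_grad_lipschitz_sq.
  - now apply f0_grad_lipschitz.
  - intros i _; now apply fi_lipschitz.
  - now apply f0_lipschitz.
Qed.
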